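(* Let $N\ge1$, $\underline s=(s_1,\dots,s_N)\in\mathbb{Z}^N$, and complex $z_1,\dots,z_N$ with $|z_1|>1$, $|z_i|\ge1$. (i) Suppose $N\ge2$ and $2\le p\le N$; let $m_1=0$ and $m_2,\dots,m_p\ge0$, $j_1,\dots,j_p\ge0$ be integers. Let $\underline m^{(p)}=(m_1,\dots,m_p,j_p,0,\dots,0)\in\mathbb{N}^N$ if $p<N$ and $\underline m^{(N)}=(m_1,\dots,m_N)$; let $\underline j^{(p)}=(j_1,\dots,j_p,0,\dots,0)\in\mathbb{N}^N$. Let $\underline m'=(m_1,\dots,m_{p-1},j_{p-1},0,\dots,0)\in\mathbb{N}^N$ and $\underline j'=(j_1,\dots,j_{p-1},0,\dots,0)\in\mathbb{N}^N$. Then $$\mathrm{B}_N\!\left[\begin{smallmatrix}\underline s\\ \underline m^{(p)}\\ \underline j^{(p)}\end{smallmatrix}\Big|\underline z\right]=z_p^{j_p}\,\mathrm{B}_N\!\left[\begin{smallmatrix}\underline s\\ \underline m'\\ \underline j'\end{smallmatrix}\Big|\underline z\right]-z_p^{j_p}Q_{N,p}(j_p;z_p,\dots,z_N)\,\mathrm{B}_{p-1}\!\left[\begin{smallmatrix}s_1,\dots,s_{p-1}\\ m_1,\dots,m_{p-1}\\ j_1,\dots,j_{p-1}\end{smallmatrix}\Big|z_1,\dots,z_{p-1}\right]+\varepsilon_p\sum_{k=t_p+1}^{T_p}z_p^{j_p-k}R_{N,p}(k).$$ (ii) For every integer $j_1\ge0$, with modulations $(0,j_1,0,\dots,0)\in\mathbb{N}^N$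 (just $(0)$ if $N=1$) and shifts $(j_1,0,\dots,0)\in\mathbb{N}^N$, $$\mathrm{B}_N\!\left[\begin{smallmatrix}\underline s\\ (0,j_1,0,\dots,0)\\ (j_1,0,\dots,0)\end{smallmatrix}\Big|\underline z\right]=z_1^{j_1}\mathrm{La}_{s_1,\dots,s_N}(1/z_1,\dots,1/z_N)-z_1^{j_1}Q_{N,1}(j_1;z_1,\dots,z_N).$$
   Context: For $r\ge1$, $\underline s\in\mathbb{Z}^r$, $\underline m\in\mathbb{N}^r$ with $m_1=0$, $\underline j\in\mathbb{N}^r$ and complex $w_i$ ($|w_1|>1$, $|w_i|\ge1$): $\mathrm{B}_r\!\left[\begin{smallmatrix}\underline s\\ \underline m\\ \underline j\end{smallmatrix}\Big|\underline w\right]=\sum\frac{w_1^{-k_1}\cdots w_r^{-k_r}}{(k_1+j_1)^{s_1}\cdots(k_r+j_r)^{s_r}}$ over $k_1\ge1$, $1\le k_i\le k_{i-1}+m_i$ ($2\le i\le r$); $\mathrm{B}_0=1$. $\mathrm{La}_{s_1,\dots,s_N}(w_1,\dots,w_N)=\sum_{k_1\ge\cdots\ge k_N\ge1}\frac{w_1^{k_1}\cdots w_N^{k_N}}{k_1^{s_1}\cdots k_N^{s_N}}$. For $1\le p\le N$, $K\ge0$: $Q_{N,p}(K;z_p,\dots,z_N)=\sum_{K\ge k_p\ge\cdots\ge k_N\ge1}\prod_{i=p}^Nz_i^{-k_i}k_i^{-s_i}$ ($0$ if $K=0$), $Q_{N,N+1}=1$. $\varepsilon_{a,b}=1,-1,0$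 according as $a<b$, $a>b$, $a=b$; $\varepsilon_p=\varepsilon_{j_{p-1},j_p+m_p}$, $t_p=\min(j_{p-1},j_p+m_p)$, $T_p=\max(j_{p-1},j_p+m_p)$. For $K\ge0$: $R_{N,p}(K)=\sum\frac{z_1^{-k_1}\cdots z_{p-2}^{-k_{p-2}}(z_{p-1}z_p)^{-k_{p-1}}}{\big(\prod_{i=1}^{p-1}(k_i+j_i)^{s_i}\big)(k_{p-1}+K)^{s_p}}Q_{N,p+1}(k_{p-1}+K;z_{p+1},\dots,z_N)$ over $k_1\ge1$, $1\le k_i\le k_{i-1}+m_i$ ($2\le i\le p-1$); for $p=2$ the factor $z_1^{-k_1}\cdots z_{p-2}^{-k_{p-2}}$ is $1$. *)

From HB Require Import structures.
From mathcomp Require Import all_boot all_order all_algebra complex.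
From mathcomp Require Import all_classical all_reals all_analysis.
Set Implicit Arguments. Unset Strict Implicit. Unset Printing Implicit Defensive.
Import Order.TTheory GRing.Theory Num.Theory.
Import numFieldTopology.Exports numFieldNormedType.Exports.
Local Open Scope ring_scope.
Local Open Scope complex_scope.

(* Conventions: all finite families (s_i), (m_i), (j_i), (z_i) are given as
   functions on nat, indexed from 1 (index 0 and indices beyond the length
   are never used). *)

Definition cser (R : realType) (u : nat -> R[i]) : R[i] :=
  limn (fun n => (\sum_(1 <= k < n) u k : (R[i])^o)).

(* nested finite sums:
   nest n i kp bd t g =
     sum_{1 <= k_i <= bd i kp} t i k_i *
       sum_{1 <= k_{i+1} <= bd (i+1) k_i} t (i+1) k_{i+1} * ... (n levels) ...
         * g k_{i+n-1}
   and nest 0 i kp bd t g = g kp. *)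
Fixpoint nest (R : realType) (n i kp : nat) (bd : nat -> nat -> nat)
    (t : nat -> nat -> R[i]) (g : nat -> R[i]) : R[i] :=
  match n with
  | 0 => g kp
  | n'.+1 => \sum_(1 <= k < (bd i kp).+1) t i k * nest n' i.+1 k bd t g
  end.

(* full nested sum of depth r >= 1 with outermost index k_1 >= 1 unbounded;
   for r = 0 it is g 0 (only used with g = 1, giving B_0 = 1). *)
Definition nestser (R : realType) (r : nat) (bd : nat -> nat -> nat)
    (t : nat -> nat -> R[i]) (g : nat -> R[i]) : R[i] :=
  match r with
  | 0 => g 0%N
  | r'.+1 => cser (fun k => t 1%N k * nest r' 2 k bd t g)
  end.

Definition Bterm (R : realType) (s : nat -> int) (j : nat -> nat)
    (w : nat -> R[i]) (i k : nat) : R[i] :=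
  (w i ^+ k)^-1 / ((k + j i)%:R ^ s i).

(* B_r [ s ; m ; j | w ] : sum over k_1 >= 1, 1 <= k_i <= k_{i-1} + m_i *)
Definition B (R : realType) (r : nat) (s : nat -> int) (m j : nat -> nat)
    (w : nat -> R[i]) : R[i] :=
  nestser r (fun i kp => kp + m i)%N (Bterm s j w) (fun _ => 1).

(* La_{s_1..s_N}(w_1..w_N) = sum_{k_1 >= ... >= k_N >= 1} prod w_i^{k_i} / k_i^{s_i} *)
Definition La (R : realType) (N : nat) (s : nat -> int) (w : nat -> R[i]) : R[i] :=
  nestser N (fun _ kp => kp) (fun i k => w i ^+ k / (k%:R ^ s i)) (fun _ => 1).

(* Q_{N,p}(K; z_p..z_N) = sum_{K >= k_p >= ... >= k_N >= 1} prod z_i^{-k_i} k_i^{-s_i}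
   (= 0 if K = 0 and p <= N, and = 1 if p = N+1) *)
Definition Q (R : realType) (N p K : nat) (s : nat -> int) (z : nat -> R[i]) : R[i] :=
  nest (N.+1 - p) p K (fun _ kp => kp) (fun i k => (z i ^+ k)^-1 / (k%:R ^ s i))
    (fun _ => 1).

Definition RR (R : realType) (N p : nat) (s : nat -> int) (m j : nat -> nat)
    (z : nat -> R[i]) (K : nat) : R[i] :=
  nestser p.-1 (fun i kp => kp + m i)%N (Bterm s j z)
    (fun k => (z p ^+ k)^-1 / ((k + K)%:R ^ s p) * Q N p.+1 (k + K) s z).

Definition eps (R : realType) (a b : nat) : R[i] :=
  if (a < b)%N then 1 else if (b < a)%N then -1 else 0.

From HB Require Import structures.
From mathcomp Require Import all_boot all_order all_algebra complex.
From mathcomp Require Import all_classical all_reals all_analysis.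
From mathcomp Require Import ring lra zify.
Set Implicit Arguments. Unset Strict Implicit. Unset Printing Implicit Defensive.
Import Order.TTheory GRing.Theory Num.Theory.
Import numFieldTopology.Exports numFieldNormedType.Exports.
Local Open Scope ring_scope.
Local Open Scope complex_scope.
Local Open Scope classical_set_scope.

(* Both identities are proved termwise in the outer indices k_1, ..., k_(p-1).
   For a fixed k_(p-1), the inner sums over k_p, ..., k_N of all the B-values
   involved are partial sums of the single sequence
     h K = z_p^(-K) K^(-s_p) Q_(N,p+1)(K):
   the left-hand side sums h over (j_p, k_(p-1) + m_p + j_p], B[m', j'] sums it
   over [1, k_(p-1) + j_(p-1)], Q_(N,p)(j_p) over [1, j_p], and the two upper
   ends differ by the window k_(p-1) + (t_p, T_p], whose terms assemble into
   the R_(N,p)(k).  Summing over the outer indices is linear because every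
   series converges absolutely: the nested inner sums grow polynomially in k_1,
   while the outer factor decays like |z_1|^(-k_1).  Part (ii) is the case
   p = 1 of the same computation, where the outer series is a shifted tail of
   the series La. *)

Section SeriesFromOne.
Variable R : realType.
Implicit Types (u v : nat -> R[i]) (a b c : R[i]).

Definition has_sum u a :=
  (fun n => (\sum_(1 <= k < n) u k : (R[i])^o)) @ \oo --> (a : (R[i])^o).

Lemma cser_has_sum u a : has_sum u a -> cser u = a.
Proof. exact: (@cvg_lim _ (@norm_hausdorff R[i] (R[i]^o))). Qed.

Lemma has_sumD u v a b :
  has_sum u a -> has_sum v b -> has_sum (fun k => u k + v k) (a + b).
Proof.
move=> hu hv; rewrite /has_sum.
under eq_fun do rewrite big_split /=.
exact: (cvgD hu hv).
Qed.

Lemma has_sumZ u a c : has_sum u a -> has_sum (fun k => c * u k) (c * a).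
Proof.
move=> hu; rewrite /has_sum.
under eq_fun do rewrite -mulr_sumr.
exact: cvgMl_tmp.
Qed.

Lemma has_sum0 : has_sum (fun=> 0) 0.
Proof.
rewrite /has_sum; under eq_fun do rewrite big1 //.
exact: cvg_cst.
Qed.

Lemma has_sum_sum (I : Type) (r : seq I) (f : I -> nat -> R[i]) (a : I -> R[i]) :
  (forall l, has_sum (f l) (a l)) ->
  has_sum (fun k => \sum_(l <- r) f l k) (\sum_(l <- r) a l).
Proof.
move=> h; elim: r => [|x r IH].
  by rewrite big_nil; congr has_sum: has_sum0; apply/funext => k; rewrite big_nil.
rewrite big_cons; congr has_sum: (has_sumD (h x) IH).
by apply/funext => k; rewrite big_cons.
Qed.

Lemma has_sum_tail u a j :
  has_sum u a -> has_sum (fun k => u (k + j)%N) (a - \sum_(1 <= k < j.+1) u k).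
Proof.
rewrite /has_sum => h; rewrite -cvg_shiftS /=.
have split_sum n : \sum_(1 <= k < n.+1) u (k + j)%N =
    \sum_(1 <= k < n + j.+1) u k - \sum_(1 <= k < j.+1) u k.
  rewrite (@big_cat_nat _ _ _ j.+1 1 (n + j.+1)) ?leq_addl //= addrC addrK.
  by rewrite -{1}(add1n j) big_addn addnS -addSn addnK.
under eq_fun do rewrite split_sum.
apply: cvgB (cvg_cst _).
by move: h; rewrite -(cvg_shiftn j.+1).
Qed.

Lemma cvgn_complex (f : nat -> R) (l : R) :
  (f : nat -> R^o) @ \oo --> (l : R^o) ->
  (fun n => (f n)%:C : (R[i])^o) @ \oo --> (l%:C : (R[i])^o).
Proof.
move=> /(@cvgrPdist_lt _ (R^o)) fl; apply/(@cvgrPdist_lt _ (R[i]^o)) => e.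
rewrite ltcE /= => /andP[/eqP Ie Re0].
have -> : e = (complex.Re e)%:C by case: e Ie Re0 => a b /= ->.
apply: filterS (fl _ Re0) => n.
by rewrite -rmorphB /= normc_def /= expr0n /= addr0 sqrtr_sqr ltcR.
Qed.

(* [R[i]^o] has no complete normed space instance, so the real and imaginary
   parts are summed separately. *)
Lemma has_sum_geometric u (A q : R) :
  0 <= q < 1 -> (forall k, `|u k| <= (A * q ^+ k)%:C) -> exists a, has_sum u a.
Proof.
move=> /andP[q0 q1] hu.
have A0 : 0 <= A.
  by have := le_trans (normr_ge0 _) (hu 0%N); rewrite expr0 mulr1 lecR.
have cvg_part (f : nat -> R) : (forall k, `|f k|%:C <= `|u k|) ->
    cvgn (series (f : nat -> R^o)).
  move=> hf; apply: (@normed_cvg R (R^o)).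
  apply: (@series_le_cvg R (fun n => `|f n|) (geometric A q)) => //.
  - by move=> n; rewrite /geometric /= mulr_ge0 // exprn_ge0.
  - by move=> n; rewrite -lecR; apply: le_trans (hf n) (hu n).
  - by apply: is_cvg_geometric_series; rewrite ger0_norm.
have /cvg_part cvg_Re : forall k, `|complex.Re (u k)|%:C <= `|u k|.
  by move=> k; apply: normc_ge_Re.
have /cvg_part cvg_Im : forall k, `|complex.Im (u k)|%:C <= `|u k|.
  move=> k; rewrite -[complex.Im _]opprK -ReiNIm normrN.
  by apply: le_trans (normc_ge_Re _) _; rewrite normrM normCi mulr1.
exists ((limn (series (fun k => complex.Re (u k)) : nat -> R^o))%:C
  + 'i%C * (limn (series (fun k => complex.Im (u k)) : nat -> R^o))%:C - u 0%N).
rewrite /has_sum -cvg_shiftS /=.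
have partial_sum n : \sum_(1 <= k < n.+1) u k =
    (series (fun k => complex.Re (u k)) n.+1)%:C
    + 'i%C * (series (fun k => complex.Im (u k)) n.+1)%:C - u 0%N.
  rewrite /series /= !rmorph_sum mulr_sumr -big_split /=.
  rewrite [in RHS]big_nat_recl // -complexE addrAC subrr add0r big_add1 /=.
  by apply: eq_bigr => k _; rewrite -complexE.
under eq_fun do rewrite partial_sum.
apply: cvgB (cvg_cst _); apply: cvgD; last apply: cvgMl_tmp;
  apply: (cvgn_complex (f := fun n => series _ n.+1)); rewrite cvg_shiftS.
- exact: cvg_Re.
- exact: cvg_Im.
Qed.

End SeriesFromOne.

Definition polyb (c D k : nat) : nat := ((k + c).+1 ^ D)%N.

Lemma leq_polyb c c' D D' k k' :
  (k + c <= k' + c')%N -> (D <= D')%N -> (polyb c D k <= polyb c' D' k')%N.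
Proof.
move=> le_base le_exp; apply: (@leq_trans (polyb c' D k')).
  by case: D {le_exp} => // D; rewrite leq_exp2r.
exact: leq_pexp2l.
Qed.

Lemma polyb_addn c D k a : polyb c D (k + a) = polyb (a + c) D k.
Proof. by rewrite /polyb addnA. Qed.

Lemma leq_polybM c c' D D' k :
  (polyb c D k * polyb c' D' k <= polyb (c + c') (D + D') k)%N.
Proof. by rewrite {3}/polyb expnD; apply: leq_mul; apply: leq_polyb; lia. Qed.

Lemma ler_bernoulli (R : realFieldType) (x : R) k :
  0 <= x -> 1 + k%:R * x <= (1 + x) ^+ k.
Proof.
move=> x0; elim: k => [|k IH]; first by rewrite mul0r addr0 expr0.
rewrite exprS -natr1; apply: le_trans (ler_wpM2l _ IH); last by rewrite addr_ge0.
have k0 : 0 <= k%:R :> R by [].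
nra.
Qed.

Lemma polyb_le_geometric (R : realType) (r : R) c D : 1 < r ->
  exists A q : R, 0 <= q < 1 /\ forall k, (polyb c D k)%:R / r ^+ k <= A * q ^+ k.
Proof.
move=> r1; have r0 : 0 < r := lt_trans ltr01 r1.
(* With [th] the [D.+1]-th root of [r], Bernoulli gives
   [(k + c).+1 <= Bc * th ^+ k], so the quotient is at most [Bc ^+ D * th ^- k]. *)
pose th := r `^ (D.+1%:R^-1).
have th_exp : th ^+ D.+1 = r.
  by rewrite -powR_mulrn ?powR_ge0 // -powRrM mulVf ?pnatr_eq0 // powRr1 // ltW.
have th1 : 1 < th.
  rewrite ltNge; apply/negP => th_le1; move: r1; rewrite -th_exp ltNge.
  by rewrite exprn_ile1 // powR_ge0.
have th0 : 0 < th := lt_trans ltr01 th1.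
pose Bc := c.+1%:R + (th - 1)^-1.
have lin_exp k : (k + c).+1%:R <= Bc * th ^+ k.
  have th1' : 0 <= th - 1 by rewrite subr_ge0 ltW.
  have := ler_bernoulli k th1'; rewrite [1 + (th - 1)]addrC subrK => bern.
  rewrite -addnS natrD mulrDl addrC; apply: lerD.
    by rewrite ler_peMr // exprn_ege1 // ltW.
  rewrite mulrC ler_pdivlMr ?subr_gt0 //.
  by apply: le_trans bern; apply: ler_wpDl.
exists (Bc ^+ D), th^-1; split.
  by rewrite invr_ge0 ltW ?invf_lt1.
move=> k; rewrite /polyb natrX -th_exp -exprM.
have num_le : (k + c).+1%:R ^+ D <= (Bc * th ^+ k) ^+ D.
  apply: (lerXn2r D _ _ (lin_exp k)); rewrite nnegrE // mulr_ge0 ?exprn_ge0 ?ltW //.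
  by rewrite /Bc ltr_wpDr // invr_ge0 subr_ge0 ltW.
apply: le_trans (ler_wpM2r _ num_le) _; first by rewrite invr_ge0 exprn_ge0 // ltW.
rewrite mulnC exprM exprVn exprSr exprMn invfM mulrA mulfK //.
by rewrite expf_neq0 // expf_neq0 // gt_eqF.
Qed.

Lemma has_sum_polyb (R : realType) (u : nat -> R[i]) (w : R[i]) c D :
  1 < `|w| -> (forall k, `|u k| <= (polyb c D k)%:R / `|w| ^+ k) ->
  exists a, has_sum u a.
Proof.
move=> w1 hu; have /RRe_real w_real := normr_real w.
move: w1 hu; rewrite -w_real ltcR => w1 hu.
have [A [q [hq hAq]]] := polyb_le_geometric c D w1.
apply: (has_sum_geometric hq) => k; apply: le_trans (hu k) _.
by rewrite -(rmorph_nat (@real_complex R)) -rmorphXn -fmorph_div lecR.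
Qed.

Lemma normr1_le_polyb (R : numDomainType) c D k : `|1 : R| <= (polyb c D k)%:R.
Proof. by rewrite normr1 ler1n expn_gt0. Qed.

Lemma norm_inv_natr_pow (F : numFieldType) n (e : int) :
  `|((n%:R : F) ^ e)^-1| <= (n.+1 ^ `|e|)%:R.
Proof.
case: e => e /=.
  rewrite normfV -exprnP normrX normr_nat.
  apply: (@le_trans _ _ 1); last by rewrite ler1n expn_gt0.
  case: n => [|n]; first by case: e => [|e]; rewrite ?expr0 ?invr1 // expr0n invr0.
  by rewrite invf_le1 ?exprn_ege1 ?exprn_gt0 // ler1n.
rewrite NegzE -exprnN invrK normrX normr_nat -natrX ler_nat.
by case: e => [|e]; rewrite ?expn0 // leq_exp2r // ltnW.
Qed.

Lemma sum_shift_sub (V : zmodType) (h : nat -> V) c lo hi : (lo <= hi)%N ->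
  \sum_(lo.+1 <= K < hi.+1) h (c + K)%N =
  \sum_(1 <= k < (c + hi).+1) h k - \sum_(1 <= k < (c + lo).+1) h k.
Proof.
move=> lo_hi; rewrite (@big_cat_nat _ _ _ (c + lo).+1 1 (c + hi).+1) //=.
  rewrite addrC addrK -addnS [(c + lo.+1)%N]addnC big_addn -addnS addKn.
  by apply: eq_bigr => K _; rewrite addnC.
by rewrite ltnS leq_add2l.
Qed.

Section NestedSums.
Variable R : realType.
Implicit Types (bd : nat -> nat -> nat) (t : nat -> nat -> R[i]) (g : nat -> R[i]).
Implicit Types (s : nat -> int) (m j : nat -> nat) (z : nat -> R[i]).

Lemma nest_cat a b i kp bd t g :
  nest (a + b) i kp bd t g = nest a i kp bd t (fun k => nest b (i + a) k bd t g).
Proof.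
elim: a i kp => [|a IH] i kp; first by rewrite add0n addn0.
by rewrite addSn /=; apply: eq_bigr => k _; rewrite IH addSnnS.
Qed.

Lemma eq_nest n i kp bd bd' t t' g g' :
  (forall i' k, (i <= i' < i + n)%N -> bd i' k = bd' i' k) ->
  (forall i' k, (i <= i' < i + n)%N -> t i' k = t' i' k) ->
  g =1 g' -> nest n i kp bd t g = nest n i kp bd' t' g'.
Proof.
elim: n i kp => [|n IH] i kp e_bd e_t e_g /=; first exact: e_g.
have ii : (i <= i < i + n.+1)%N by rewrite leqnn addnS ltnS leq_addr.
rewrite e_bd //; apply: eq_bigr => k _; rewrite e_t //; congr (_ * _).
by apply: IH => // i' k' /andP[lo hi]; [apply: e_bd | apply: e_t];
  rewrite (ltnW lo) addnS -addSn.
Qed.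

Lemma eq_nest_const n i k k' bd bd' t t' (c : R[i]) :
  bd i k = bd' i k' ->
  (forall i' l, (i < i' < i + n)%N -> bd i' l = bd' i' l) ->
  (forall i' l, (i <= i' < i + n)%N -> t i' l = t' i' l) ->
  nest n i k bd t (fun=> c) = nest n i k' bd' t' (fun=> c).
Proof.
case: n => [|n] //= e_bd0 e_bd e_t; rewrite e_bd0; apply: eq_bigr => l _.
rewrite e_t ?leqnn ?addnS ?ltnS ?leq_addr //; congr (_ * _).
by apply: eq_nest => // i' l' /andP[lo hi]; [apply: e_bd | apply: e_t];
  rewrite ?lo ?(ltnW lo) addnS -addSn.
Qed.

Lemma nest_sum (I : Type) (r : seq I) n i kp bd t (f : I -> nat -> R[i]) :
  nest n i kp bd t (fun k => \sum_(l <- r) f l k) =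
  \sum_(l <- r) nest n i kp bd t (f l).
Proof.
elim: n i kp => [|n IH] i kp //=; rewrite exchange_big /=.
by apply: eq_bigr => k _; rewrite IH mulr_sumr.
Qed.

Lemma nestZ n i kp bd t c g :
  nest n i kp bd t (fun k => c * g k) = c * nest n i kp bd t g.
Proof.
elim: n i kp => [|n IH] i kp //=.
by rewrite mulr_sumr; apply: eq_bigr => k _; rewrite IH mulrCA.
Qed.

Lemma nestD n i kp bd t g1 g2 :
  nest n i kp bd t (fun k => g1 k + g2 k) = nest n i kp bd t g1 + nest n i kp bd t g2.
Proof.
elim: n i kp => [|n IH] i kp //=.
by rewrite -big_split; apply: eq_bigr => k _; rewrite IH mulrDr.
Qed.

Lemma nest_polyb n i bd t g M c D :
  (forall i' k, (i <= i' < i + n)%N -> (bd i' k <= k + M)%N) ->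
  (forall i' k, (i <= i' < i + n)%N -> `|t i' k| <= (polyb c D k)%:R) ->
  (forall k, `|g k| <= (polyb c D k)%:R) ->
  exists c' D', forall kp, `|nest n i kp bd t g| <= (polyb c' D' kp)%:R.
Proof.
elim: n i => [|n IH] i bd_le t_le g_le; first by exists c, D.
have [||c' [D' nest_le]] := IH i.+1 _ _ g_le.
- by move=> i' k /andP[lo hi]; apply: bd_le; rewrite (ltnW lo) addnS -addSn.
- by move=> i' k /andP[lo hi]; apply: t_le; rewrite (ltnW lo) addnS -addSn.
have ii : (i <= i < i + n.+1)%N by rewrite leqnn addnS ltnS leq_addr.
pose C := (M + (c + c'))%N; exists C, (D + D').+1 => kp /=.
apply: le_trans (ler_norm_sum _ _ _) _.
apply: (@le_trans _ _ (\sum_(1 <= k < (bd i kp).+1) (polyb C (D + D') kp)%:R)).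
  apply: ler_sum_nat => k /andP[_ k_le]; rewrite normrM.
  apply: le_trans (ler_pM _ _ (t_le i k ii) (nest_le k)) _ => //.
  rewrite -natrM ler_nat; apply: leq_trans (leq_polybM _ _ _ _ _) _.
  by apply: leq_polyb => //; have := bd_le i kp ii; rewrite /C; lia.
rewrite sumr_const_nat subn1 /= -mulrnA ler_nat mulnC.
rewrite /polyb expnS leq_mul //; have := bd_le i kp ii; rewrite /C; lia.
Qed.

Definition Qterm s z (i k : nat) : R[i] := (z i ^+ k)^-1 / (k%:R ^ s i).

Local Notation bdm m := (fun i kp => (kp + m i)%N).

(* The k-th term of the outer series of [nestser n.+1]: thus
   [B n.+1 s m j z = cser (Bsummand n s m j z (fun=> 1))] and
   [RR N a.+2 s m j z K = cser (Bsummand a s m j z _)]. *)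
Definition Bsummand n s m j z g (k : nat) : R[i] :=
  Bterm s j z 1 k * nest n 2 k (bdm m) (Bterm s j z) g.

Lemma BsummandD n s m j z g1 g2 k :
  Bsummand n s m j z (fun x => g1 x + g2 x) k =
  Bsummand n s m j z g1 k + Bsummand n s m j z g2 k.
Proof. by rewrite /Bsummand nestD mulrDr. Qed.

Lemma BsummandZ n s m j z c g k :
  Bsummand n s m j z (fun x => c * g x) k = c * Bsummand n s m j z g k.
Proof. by rewrite /Bsummand nestZ mulrCA. Qed.

Lemma Bsummand_sum (I : Type) (r : seq I) n s m j z (f : I -> nat -> R[i]) k :
  Bsummand n s m j z (fun x => \sum_(l <- r) f l x) k =
  \sum_(l <- r) Bsummand n s m j z (f l) k.
Proof. by rewrite /Bsummand nest_sum mulr_sumr. Qed.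

Lemma Bterm_shift0 s j z i k : j i = 0%N -> Bterm s j z i k = Qterm s z i k.
Proof. by rewrite /Bterm => ->; rewrite addn0. Qed.

Lemma Bterm_Qterm s j z i k : z i != 0 ->
  Bterm s j z i k = z i ^+ j i * Qterm s z i (k + j i).
Proof.
move=> zi0; rewrite /Bterm /Qterm exprD invfM [_ / z i ^+ j i / _]mulrAC.
by rewrite mulrCA mulfV ?mulr1 // expf_neq0.
Qed.

Lemma norm_Bterm_le s j z i k :
  `|Bterm s j z i k| <= (`|z i| ^+ k)^-1 * (polyb (j i) `|s i| k)%:R.
Proof.
rewrite /Bterm normrM normfV normrX ler_wpM2l ?invr_ge0 ?exprn_ge0 //.
exact: norm_inv_natr_pow.
Qed.

Lemma norm_Bterm_le_polyb s j z i k :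
  1 <= `|z i| -> `|Bterm s j z i k| <= (polyb (j i) `|s i| k)%:R.
Proof.
move=> zi1; apply: le_trans (norm_Bterm_le _ _ _ _ _) _.
by rewrite ler_piMl // invf_le1 ?exprn_ege1 ?exprn_gt0 // (lt_le_trans ltr01).
Qed.

Lemma Bsummand_summable n s m j z g c D :
  1 < `|z 1%N| -> (forall i, (2 <= i <= n.+1)%N -> 1 <= `|z i|) ->
  (forall k, `|g k| <= (polyb c D k)%:R) ->
  exists a, has_sum (Bsummand n s m j z g) a.
Proof.
move=> z1 zi g_le.
pose M := (\max_(i < n.+2) m i)%N; pose J := (\max_(i < n.+2) j i)%N.
pose S := (\max_(i < n.+2) `|s i|)%N.
have t_le i k : (2 <= i < 2 + n)%N ->
    `|Bterm s j z i k| <= (polyb (J + c) (S + D) k)%:R.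
  move=> /andP[i2 ilt]; have zi1 : 1 <= `|z i| by apply: zi; rewrite i2.
  apply: le_trans (norm_Bterm_le_polyb s j k zi1) _.
  rewrite ler_nat leq_polyb // ?leq_add2l; apply: leq_trans (leq_addr _ _).
    exact: (leq_bigmax (Ordinal ilt)).
  exact: (leq_bigmax (Ordinal ilt)).
have g_le' k : `|g k| <= (polyb (J + c) (S + D) k)%:R.
  by apply: le_trans (g_le k) _; rewrite ler_nat; apply: leq_polyb; lia.
have bd_le i k : (2 <= i < 2 + n)%N -> (k + m i <= k + M)%N.
  by move=> /andP[_ ilt]; rewrite leq_add2l (leq_bigmax (Ordinal ilt)).
have [c' [D' nest_le]] := nest_polyb bd_le t_le g_le'.
apply: (@has_sum_polyb _ _ (z 1%N) (j 1%N + c') (`|s 1%N| + D')) => // k.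
rewrite /Bsummand normrM mulrC.
apply: le_trans (ler_pM _ _ (nest_le k) (norm_Bterm_le _ _ _ _ _)) _ => //.
rewrite mulrCA mulrC ler_wpM2r ?invr_ge0 ?exprn_ge0 //.
by rewrite -natrM ler_nat mulnC leq_polybM.
Qed.

Lemma Q_nest N p K s z :
  Q N p K s z = nest (N.+1 - p) p K (fun _ kp => kp) (Qterm s z) (fun=> 1).
Proof. by []. Qed.

Lemma Q_rec N p K s z : (p <= N)%N ->
  Q N p K s z = \sum_(1 <= k < K.+1) Qterm s z p k * Q N p.+1 k s z.
Proof. by move=> pN; rewrite /Q subSS subSn. Qed.

Lemma Q_polyb N p s z :
  (forall i, (p <= i <= N)%N -> 1 <= `|z i|) ->
  exists c D, forall K, `|Q N p K s z| <= (polyb c D K)%:R.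
Proof.
move=> zi; pose S := (\max_(i < N.+1) `|s i|)%N.
apply: (@nest_polyb _ _ _ _ _ 0 0 S) => [i k _|i k /andP[pi iN]|k].
- by rewrite addn0.
- have ilt : (i < N.+1)%N by lia.
  have zi1 : 1 <= `|z i| by apply: zi; lia.
  change (`|Qterm s z i k| <= (polyb 0 S k)%:R).
  rewrite -(@Bterm_shift0 _ (fun=> 0%N)) //.
  apply: le_trans (norm_Bterm_le_polyb s (fun=> 0%N) k zi1) _.
  by rewrite ler_nat leq_polyb // (leq_bigmax (Ordinal ilt)).
- exact: normr1_le_polyb.
Qed.

Lemma sum_shift_eps (h : nat -> R[i]) (kq m j j' : nat) :
  \sum_(1 <= k < (kq + m).+1) h (k + j)%N =
  \sum_(1 <= k < (kq + j').+1) h k - \sum_(1 <= k < j.+1) h k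
  + eps R j' (j + m) *
      \sum_((minn j' (j + m)).+1 <= K < (maxn j' (j + m)).+1) h (kq + K)%N.
Proof.
have -> : \sum_(1 <= k < (kq + m).+1) h (k + j)%N =
    \sum_(1 <= k < (kq + (j + m)).+1) h k - \sum_(1 <= k < j.+1) h k.
  rewrite (eq_bigr (fun k => h (j + k)%N)) => [|k _]; last by rewrite addnC.
  by rewrite sum_shift_sub // addn0 addnCA.
rewrite /eps; case: ltngtP => [lt_j|lt_j|->].
- by rewrite sum_shift_sub ?(ltnW lt_j) //; ring.
- by rewrite sum_shift_sub ?(ltnW lt_j) //; ring.
- by rewrite mul0r addr0.
Qed.

Lemma La_inv_cser N s z :
  La N.+1 s (fun i => (z i)^-1) = cser (fun K => Qterm s z 1 K * Q N.+1 2 K s z).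
Proof.
have Qterm_inv : (fun i k => (z i)^-1 ^+ k / (k%:R ^ s i)) = Qterm s z.
  by apply/funext => i; apply/funext => k; rewrite /Qterm exprVn.
rewrite /La /nestser Qterm_inv; congr cser; apply/funext => k.
by rewrite Q_nest !subSS subn0 /Qterm exprVn.
Qed.

Lemma B_shift_base N s z (j1 : nat) :
  1 < `|z 1%N| -> (forall i, (2 <= i <= N.+1)%N -> 1 <= `|z i|) ->
  B N.+1 s (fun i => if i == 2%N then j1 else 0%N)
    (fun i => if i == 1%N then j1 else 0%N) z =
  z 1%N ^+ j1 * La N.+1 s (fun i => (z i)^-1) - z 1%N ^+ j1 * Q N.+1 1 j1 s z.
Proof.
move=> z1 zi; have z10 : z 1%N != 0 by rewrite -normr_gt0 (lt_trans ltr01).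
pose v K := Qterm s z 1 K * Q N.+1 2 K s z.
have v_eq : Bsummand N s (fun=> 0%N) (fun=> 0%N) z (fun=> 1) = v.
  apply/funext => k; rewrite /Bsummand /v Bterm_shift0 // Q_nest !subSS subn0.
  apply: congr1; apply: eq_nest => [i l _|i l _|l] /=; first exact: addn0.
    exact: Bterm_shift0.
  by [].
have [a v_sum] : exists a, has_sum v a.
  by rewrite -v_eq; apply: Bsummand_summable z1 zi (@normr1_le_polyb _ 0 0).
rewrite La_inv_cser (cser_has_sum v_sum) Q_rec // -mulrBr.
rewrite -(cser_has_sum (has_sumZ (c := z 1%N ^+ j1) (has_sum_tail (j := j1) v_sum))).
congr cser; apply/funext => k.
rewrite /v Bterm_Qterm //= -mulrA; do 2 apply: congr1.
rewrite Q_nest !subSS subn0.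
apply: eq_nest_const => [|i l /andP[i2 _]|i l /andP[i2 _]] /=.
- by [].
- by rewrite (gtn_eqF i2) addn0.
- by rewrite Bterm_shift0 // (gtn_eqF (leq_trans _ i2)).
Qed.

End NestedSums.

Section ShiftStep.
Variables (R : realType) (n a : nat) (s : nat -> int) (z : nat -> R[i]) (m j : nat -> nat).
Local Notation N := n.+1.
Local Notation p := a.+2.
Hypotheses (pN : (p <= N)%N) (z1 : 1 < `|z 1%N|)
  (z_ge1 : forall i, (1 <= i <= N)%N -> 1 <= `|z i|).

Let zp_neq0 : z p != 0.
Proof. by rewrite -normr_gt0 (lt_le_trans ltr01) // z_ge1. Qed.

Let h K := Qterm s z p K * Q N p.+1 K s z.

Let Q_first K : Q N p K s z = \sum_(1 <= k < K.+1) h k.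
Proof. exact: Q_rec. Qed.

Let z_ge1_low i : (2 <= i <= a.+1)%N -> 1 <= `|z i|.
Proof. by move=> ?; apply: z_ge1; lia. Qed.

(* For [m''], [j''] that agree with [m], [j] below [p] and have the shape of
   [mp], [jp] or [m'], [j'] above it, the levels [p, ..., N] collapse to a
   partial sum of [h]. *)
Lemma Bsummand_split m'' j'' c d k :
  (forall i, (i < p)%N -> m'' i = m i /\ j'' i = j i) ->
  m'' p = d -> j'' p = c -> m'' p.+1 = c ->
  (forall i, (p < i)%N -> j'' i = 0%N) -> (forall i, (p.+1 < i)%N -> m'' i = 0%N) ->
  Bsummand n s m'' j'' z (fun=> 1) k =
  Bsummand a s m j z (fun kq => z p ^+ c * \sum_(1 <= l < (kq + d).+1) h (l + c)%N) k.
Proof.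
move=> low <- <- mid high_j high_m.
have -> : n = (a + (N - p).+1)%N by lia.
rewrite /Bsummand nest_cat.
have -> : Bterm s j'' z 1 k = Bterm s j z 1 k by rewrite /Bterm; have [_ ->] := low 1%N isT.
apply: congr1; apply: eq_nest => [i l /andP[_ ip]|i l /andP[_ ip]|kq].
- by have [-> _] := low i ip.
- by rewrite /Bterm; have [_ ->] := low i ip.
rewrite /= add2n mulr_sumr; apply: eq_bigr => l _.
rewrite Bterm_Qterm // -mulrA /h Q_nest subSS; do 2 apply: congr1.
apply: eq_nest_const => [|i' l' /andP[pi' _]|i' l' /andP[pi' _]] /=.
- by rewrite mid.
- by rewrite high_m ?addn0.
- by rewrite Bterm_shift0 // high_j.
Qed.

Lemma has_sum_B_pred : has_sum (Bsummand a s m j z (fun=> 1)) (B p.-1 s m j z).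
Proof.
have [b sum_b] := Bsummand_summable s m j z1 z_ge1_low (@normr1_le_polyb _ 0 0).
by have -> : B p.-1 s m j z = b := cser_has_sum sum_b.
Qed.

Let gK K kq := Bterm s (fun=> K) z p kq * Q N p.+1 (kq + K) s z.

Lemma has_sum_RR K : has_sum (Bsummand a s m j z (gK K)) (RR N p s m j z K).
Proof.
have [|c [D Q_le]] := @Q_polyb R N p.+1 s z; first by move=> i ?; apply: z_ge1; lia.
have gK_le kq : `|gK K kq| <= (polyb (K + (K + c)) (`|s p| + D) kq)%:R.
  have zp1 : 1 <= `|z p| by apply: z_ge1; lia.
  rewrite normrM; apply: le_trans (ler_pM _ _ (norm_Bterm_le_polyb s _ kq zp1) (Q_le _)) _ => //.
  by rewrite (@polyb_addn c D kq K) -natrM ler_nat leq_polybM.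
have [b sum_b] := Bsummand_summable s m j z1 z_ge1_low gK_le.
by have -> : RR N p s m j z K = b := cser_has_sum sum_b.
Qed.

Lemma gK_shift K kq : z p ^ ((j p)%:Z - K%:Z) * gK K kq = z p ^+ j p * h (kq + K)%N.
Proof.
have pow_eq : z p ^ ((j p)%:Z - K%:Z) * (z p ^+ kq)^-1 =
    z p ^+ j p * (z p ^+ (kq + K))^-1.
  by rewrite !exprnN exprnP -!expfzDr //; congr (_ ^ _); rewrite PoszD; ring.
by rewrite /gK /h /Bterm /Qterm !mulrA pow_eq.
Qed.

Lemma inner_sum_decomp kq :
  z p ^+ j p * \sum_(1 <= l < (kq + m p).+1) h (l + j p)%N =
  z p ^+ j p * (\sum_(1 <= l < (kq + j p.-1).+1) h l)
  + (- (z p ^+ j p * Q N p (j p) s z)) * 1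
  + eps R (j p.-1) (j p + m p) *
      \sum_((minn (j p.-1) (j p + m p)).+1 <= K < (maxn (j p.-1) (j p + m p)).+1)
        z p ^ ((j p)%:Z - K%:Z) * gK K kq.
Proof.
set lo := (minn _ _).+1; set hi := (maxn _ _).+1.
have -> : \sum_(lo <= K < hi) z p ^ ((j p)%:Z - K%:Z) * gK K kq =
    z p ^+ j p * \sum_(lo <= K < hi) h (kq + K)%N.
  by rewrite mulr_sumr; apply: eq_bigr => K _; apply: gK_shift.
rewrite (sum_shift_eps h kq (m p) (j p) (j p.-1)) Q_first; ring.
Qed.

Lemma B_shift_step :
  let mp := fun i => if (i <= p)%N then m i
                     else if i == p.+1 then j p else 0%N in
  let jp := fun i => if (i <= p)%N then j i else 0%N in
  let m' := fun i => if (i <= p.-1)%N then m i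
                     else if i == p then j p.-1 else 0%N in
  let j' := fun i => if (i <= p.-1)%N then j i else 0%N in
  B N s mp jp z =
    z p ^+ j p * B N s m' j' z
    - z p ^+ j p * Q N p (j p) s z * B p.-1 s m j z
    + eps R (j p.-1) (j p + m p)%N *
        \sum_((minn (j p.-1) (j p + m p)).+1 <= k < (maxn (j p.-1) (j p + m p)).+1)
           z p ^ ((j p)%:Z - k%:Z) * RR N p s m j z k.
Proof.
move=> mp jp m' j'.
have B_mp : B N s mp jp z = cser (Bsummand a s m j z
    (fun kq => z p ^+ j p * \sum_(1 <= l < (kq + m p).+1) h (l + j p)%N)).
  rewrite /B /nestser; congr cser; apply/funext => k.
  by apply: (Bsummand_split (m'' := mp) (j'' := jp)) => [i ?||||i ?|i ?];
    rewrite /mp /jp; do ?case: ifP; lia.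
have sum_B' : has_sum (Bsummand a s m j z
    (fun kq => \sum_(1 <= l < (kq + j p.-1).+1) h l)) (B N s m' j' z).
  have z_ge1_up i : (2 <= i <= N)%N -> 1 <= `|z i| by move=> ?; apply: z_ge1; lia.
  have [b sum_b] := Bsummand_summable s m' j' z1 z_ge1_up (@normr1_le_polyb _ 0 0).
  have -> : B N s m' j' z = b := cser_has_sum sum_b.
  congr has_sum: sum_b; apply/funext => k.
  rewrite (@Bsummand_split m' j' 0%N (j p.-1)) => [|i ?||||i ?|i ?];
    rewrite /m' /j'; do ?case: ifP; try lia.
  congr Bsummand; apply/funext => kq.
  by rewrite expr0 mul1r; apply: eq_bigr => l _; rewrite addn0.
have sum_all := has_sumD (has_sumD (has_sumZ (c := z p ^+ j p) sum_B')
    (has_sumZ (c := - (z p ^+ j p * Q N p (j p) s z)) has_sum_B_pred))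
  (has_sumZ (c := eps R (j p.-1) (j p + m p))
    (has_sum_sum
      (r := index_iota (minn (j p.-1) (j p + m p)).+1 (maxn (j p.-1) (j p + m p)).+1)
      (fun K => has_sumZ (c := z p ^ ((j p)%:Z - K%:Z)) (@has_sum_RR K)))).
rewrite mulNr in sum_all; rewrite B_mp -(cser_has_sum sum_all).
congr cser; apply/funext => k.
rewrite (funext inner_sum_decomp) !BsummandD !BsummandZ Bsummand_sum.
by under eq_bigr do rewrite BsummandZ.
Qed.

End ShiftStep.

Unset Implicit Arguments.
Local Close Scope classical_set_scope.

Theorem mainTheorem6 (R : realType) (N : nat) (s : nat -> int) (z : nat -> R[i]) :
  (1 <= N)%N ->
  1 < `|z 1%N| ->
  (forall i, (1 <= i <= N)%N -> 1 <= `|z i|) ->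
  (* (i) *)
  (forall (p : nat) (m j : nat -> nat),
     (2 <= N)%N -> (2 <= p <= N)%N -> m 1%N = 0%N ->
     let mp := fun i => if (i <= p)%N then m i
                        else if i == p.+1 then j p else 0%N in
     let jp := fun i => if (i <= p)%N then j i else 0%N in
     let m' := fun i => if (i <= p.-1)%N then m i
                        else if i == p then j p.-1 else 0%N in
     let j' := fun i => if (i <= p.-1)%N then j i else 0%N in
     B N s mp jp z =
       z p ^+ j p * B N s m' j' z
       - z p ^+ j p * Q N p (j p) s z * B p.-1 s m j z
       + eps R (j p.-1) (j p + m p)%N *
           \sum_((minn (j p.-1) (j p + m p)).+1 <= k < (maxn (j p.-1) (j p + m p)).+1)
              z p ^ ((j p)%:Z - k%:Z) * RR N p s m j z k)
  /\
  (* (ii) *)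
  (forall j1 : nat,
     B N s (fun i => if i == 2%N then j1 else 0%N)
           (fun i => if i == 1%N then j1 else 0%N) z =
       z 1%N ^+ j1 * La N s (fun i => (z i)^-1) - z 1%N ^+ j1 * Q N 1 j1 s z).
Proof.
case: N => [//|n] _ z1 z_ge1; split.
-
  move=> p m j _ /andP[p2 pN] _.
  have [a ?] : exists a, p = a.+2 by exists (p - 2)%N; lia.
  subst p; exact (B_shift_step s m j pN z1 z_ge1).
- move=> j1; apply: B_shift_base => // i /andP[i2 iN].
  by apply: z_ge1; rewrite iN ltnW.
Qed.
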